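(* Let $t\geq 0$ be an integer. There exists a partition $\mathcal N_t$ of the set $\mathbb N$ of nonnegative integers such that (i) each class $N\in\mathcal N_t$ is a residue class modulo $2^r$ for some $r\ge 0$, i.e. of the form $a+2^r\mathbb N$ with $0\leq a<2^r$; (ii) for every integer $k$ the set $B(k,t)=\{n\in \mathbb N:s(n+t)-s(n)=k\}$ is a finite (possibly empty) union of classes of $\mathcal N_t$. In particular, each set $B(k,t)$ has an asymptotic density $\delta(k,t)$. Moreover, for all $k\in\mathbb{Z}$ and all integers $t\geq 1$ these densities satisfy \[ \delta(k,1)=\begin{cases}2^{k-2},&k\leq 1,\\0&\text{otherwise,}\end{cases}\qquad \delta(k,2t)=\delta(k,t),\qquad \delta(k,2t+1)=\tfrac 12 \delta(k-1,t)+\tfrac 12\delta(k+1,t+1). \]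
   Context: For a nonnegative integer $n$, $s(n)$ denotes the binary sum of digits of $n$ (the number of digits $1$ in its base-$2$ expansion). *)

From Stdlib Require Import Reals Lra Lia ZArith Arith List.
Open Scope R_scope.

(* Binary digit sum s(n): number of 1 digits in base 2.
   aux uses fuel; fuel n suffices since n/2 < n for n > 0. *)
Fixpoint digsum_aux (fuel n : nat) : nat :=
  match fuel with
  | O => O
  | S f => (n mod 2 + digsum_aux f (n / 2))%nat
  end.
Definition s (n : nat) : nat := digsum_aux n n.

Definition inB (k : Z) (t n : nat) : Prop :=
  (Z.of_nat (s (n + t)) - Z.of_nat (s n))%Z = k.

Definition inBb (k : Z) (t n : nat) : bool :=
  Z.eqb (Z.of_nat (s (n + t)) - Z.of_nat (s n))%Z k.

Definition countB (k : Z) (t N : nat) : nat :=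
  List.length (List.filter (inBb k t) (List.seq 0 N)).

Definition has_densityB (k : Z) (t : nat) (d : R) : Prop :=
  Un_cv (fun N => INR (countB k t N) / INR N) d.

Definition in_class (r a n : nat) : Prop := (n mod 2 ^ r = a)%nat.

Definition is_dyadic_partition (P : nat -> nat -> Prop) : Prop :=
  (forall r a, P r a -> (a < 2 ^ r)%nat) /\
  (forall n, exists r a, P r a /\ in_class r a n) /\
  (forall r a r' a' n, P r a -> P r' a' -> in_class r a n -> in_class r' a' n ->
     r = r' /\ a = a').

From Stdlib Require Import Reals ZArith Arith List Lia Lra ZifyNat.
From Coquelicot Require Import Coquelicot.
Open Scope R_scope.

(* Since s(2q + b) = b + s(q), membership of n in B(k, 2t) is that of n/2 in B(k, t), and
   membership in B(k, 2t+1) is that of n/2 in B(k-1, t) for even n and in B(k+1, t+1) for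
   odd n. Splitting every residue class by the last binary digit therefore turns
   partitions adapted to t and t+1 into one adapted to 2t and 2t+1, and the counting
   function of such an interleaved set up to N is the sum of the two counting functions up
   to about N/2, which averages the densities. For t = 1 the recursion refers to t = 1
   itself: the partition is the fixed point of the splitting, and the densities follow by
   downward induction on k from the empty sets B(k, 1), k >= 2, as s(n+1) <= s(n) + 1. *)

Ltac div_lia := zify; Z.to_euclidean_division_equations; lia.

Lemma Z_downward_ind (A : Z -> Prop) (m : Z) :
  (forall k, (m <= k)%Z -> A k) -> (forall k, (k < m)%Z -> A (k + 1)%Z -> A k) -> forall k, A k.
Proof.
  intros Hbase Hstep k. remember (Z.to_nat (m - k)) as j eqn:Hj. revert k Hj.
  induction j as [|j IH]; intros k Hj; [apply Hbase; lia | apply Hstep, IH; lia].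
Qed.

Lemma dyadic_ind (A : nat -> Prop) :
  A 0%nat -> A 1%nat -> (forall t, A t -> A (2 * t)%nat) ->
  (forall t, A t -> A (t + 1)%nat -> A (2 * t + 1)%nat) -> forall t, A t.
Proof.
  intros H0 H1 Heven Hodd t. induction t as [t IH] using (well_founded_induction lt_wf).
  destruct (Nat.Even_or_Odd t) as [[u ->] | [u ->]]; destruct u as [|u]; auto.
  - apply Heven, IH. lia.
  - apply Hodd; apply IH; lia.
Qed.

Lemma digsum_aux_0 f : digsum_aux f 0 = 0%nat.
Proof. induction f; simpl; auto. Qed.

Lemma digsum_aux_fuel f1 f2 n :
  (n <= f1)%nat -> (n <= f2)%nat -> digsum_aux f1 n = digsum_aux f2 n.
Proof.
  revert f2 n; induction f1 as [|f1 IH]; intros [|f2] n H1 H2;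
    try (replace n with 0%nat by lia; now rewrite !digsum_aux_0).
  cbn [digsum_aux]. f_equal. apply IH; div_lia.
Qed.

Lemma s_half n : s n = (n mod 2 + s (n / 2))%nat.
Proof.
  unfold s. destruct n as [|n]; [reflexivity|].
  cbn [digsum_aux]. f_equal. apply digsum_aux_fuel; div_lia.
Qed.

Lemma s_succ_le n : (s (n + 1) <= s n + 1)%nat.
Proof.
  induction n as [n IH] using (well_founded_induction lt_wf).
  rewrite (s_half (n + 1)), (s_half n).
  destruct (Nat.eqb_spec (n mod 2) 0) as [E|E].
  - replace ((n + 1) / 2)%nat with (n / 2)%nat by div_lia. div_lia.
  - replace ((n + 1) / 2)%nat with (n / 2 + 1)%nat by div_lia.
    specialize (IH (n / 2)%nat ltac:(div_lia)). div_lia.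
Qed.

Definition interleave {A : Type} (f0 f1 : nat -> A) (n : nat) : A :=
  if (n mod 2 =? 0)%nat then f0 (n / 2)%nat else f1 (n / 2)%nat.

Lemma interleave_double_add {A : Type} (f0 f1 : nat -> A) q b : (b < 2)%nat ->
  interleave f0 f1 (2 * q + b) = if (b =? 0)%nat then f0 q else f1 q.
Proof.
  intros Hb. unfold interleave.
  replace ((2 * q + b) mod 2)%nat with b by div_lia.
  replace ((2 * q + b) / 2)%nat with q by div_lia. reflexivity.
Qed.

Definition sdiff (t n : nat) : Z := (Z.of_nat (s (n + t)) - Z.of_nat (s n))%Z.

Lemma sdiff_0 n : sdiff 0 n = 0%Z.
Proof. unfold sdiff. rewrite Nat.add_0_r. lia. Qed.

Lemma sdiff_double t n : sdiff (2 * t) n = sdiff t (n / 2).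
Proof.
  unfold sdiff. rewrite (s_half (n + 2 * t)), (s_half n).
  replace ((n + 2 * t) mod 2)%nat with (n mod 2)%nat by div_lia.
  replace ((n + 2 * t) / 2)%nat with (n / 2 + t)%nat by div_lia. lia.
Qed.

Lemma sdiff_double_succ t n : sdiff (2 * t + 1) n =
  interleave (fun q => sdiff t q + 1)%Z (fun q => sdiff (t + 1) q - 1)%Z n.
Proof.
  unfold interleave, sdiff. rewrite (s_half (n + (2 * t + 1))), (s_half n).
  destruct (Nat.eqb_spec (n mod 2) 0).
  - replace ((n + (2 * t + 1)) / 2)%nat with (n / 2 + t)%nat by div_lia. div_lia.
  - replace ((n + (2 * t + 1)) / 2)%nat with (n / 2 + (t + 1))%nat by div_lia. div_lia.
Qed.

Lemma inB_zero k n : inB k 0 n <-> k = 0%Z.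
Proof. change (sdiff 0 n = k <-> k = 0%Z). rewrite sdiff_0. lia. Qed.

Lemma inB_double k t n : inB k (2 * t) n <-> interleave (inB k t) (inB k t) n.
Proof.
  change (sdiff (2 * t) n = k <-> interleave (inB k t) (inB k t) n).
  rewrite sdiff_double. unfold interleave. now destruct (_ =? _)%nat.
Qed.

Lemma inB_double_succ k t n :
  inB k (2 * t + 1) n <-> interleave (inB (k - 1) t) (inB (k + 1) (t + 1)) n.
Proof.
  change (sdiff (2 * t + 1) n = k <-> interleave (inB (k - 1) t) (inB (k + 1) (t + 1)) n).
  rewrite sdiff_double_succ. unfold interleave, inB. fold (sdiff t (n / 2)) (sdiff (t + 1) (n / 2)).
  destruct (_ =? _)%nat; lia.
Qed.

Lemma inBb_spec k t n : inBb k t n = true <-> inB k t n.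
Proof. apply Z.eqb_eq. Qed.

Lemma inBb_zero k n : inBb k 0 n = (k =? 0)%Z.
Proof. apply Bool.eq_iff_eq_true. rewrite inBb_spec, inB_zero. symmetry. apply Z.eqb_eq. Qed.

Lemma inBb_double k t n : inBb k (2 * t) n = interleave (inBb k t) (inBb k t) n.
Proof.
  apply Bool.eq_iff_eq_true. rewrite inBb_spec, inB_double.
  unfold interleave. destruct (_ =? _)%nat; symmetry; apply inBb_spec.
Qed.

Lemma inBb_double_succ k t n :
  inBb k (2 * t + 1) n = interleave (inBb (k - 1) t) (inBb (k + 1) (t + 1)) n.
Proof.
  apply Bool.eq_iff_eq_true. rewrite inBb_spec, inB_double_succ.
  unfold interleave. destruct (_ =? _)%nat; symmetry; apply inBb_spec.
Qed.

Lemma not_inB_one k n : (2 <= k)%Z -> ~ inB k 1 n.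
Proof. unfold inB. pose proof (s_succ_le n). lia. Qed.

Lemma in_class_succ r a n :
  in_class (S r) a n <-> (n mod 2 = a mod 2 /\ in_class r (a / 2) (n / 2))%nat.
Proof.
  unfold in_class. rewrite Nat.pow_succ_r', Nat.Div0.mod_mul_r.
  pose proof (Nat.mod_upper_bound (n / 2) (2 ^ r) (Nat.pow_nonzero 2 r ltac:(lia))).
  assert (a = 2 * (a / 2) + a mod 2)%nat by div_lia.
  assert (n mod 2 < 2 /\ a mod 2 < 2)%nat by div_lia.
  remember (n mod 2)%nat as b. remember (a mod 2)%nat as c.
  remember ((n / 2) mod 2 ^ r)%nat as m. remember (a / 2)%nat as a'.
  lia.
Qed.

Lemma in_class_double_add r a b n : (b < 2)%nat ->
  in_class (S r) (2 * a + b) n <-> (n mod 2 = b /\ in_class r a (n / 2))%nat.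
Proof.
  intros Hb. rewrite in_class_succ.
  replace ((2 * a + b) mod 2)%nat with b by div_lia.
  replace ((2 * a + b) / 2)%nat with a by div_lia. reflexivity.
Qed.

Definition covered (P : nat -> nat -> Prop) (n : nat) : Prop :=
  exists r a, P r a /\ in_class r a n.

Definition unique_at (P : nat -> nat -> Prop) (r : nat) : Prop :=
  forall a r' a' n, P r a -> P r' a' -> in_class r a n -> in_class r' a' n -> r = r' /\ a = a'.

Definition trivial_part (r a : nat) : Prop := r = 0%nat /\ a = 0%nat.

Definition interleave_part (P Q : nat -> nat -> Prop) (r : nat) : nat -> Prop :=
  match r with
  | O => fun _ => False
  | S r => interleave (P r) (Q r)
  end.

(* The fixed point [Q = interleave_part P Q]; for [P = trivial_part] its classes are the
   sets [2^j - 1 + 2^(j+1) N] of numbers with exactly [j] trailing ones. *)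
Fixpoint interleave_part_fix (P : nat -> nat -> Prop) (r : nat) : nat -> Prop :=
  match r with
  | O => fun _ => False
  | S r => interleave (P r) (interleave_part_fix P r)
  end.

Lemma interleave_part_fix_unfold P r a :
  interleave_part_fix P r a <-> interleave_part P (interleave_part_fix P) r a.
Proof. now destruct r. Qed.

Lemma trivial_part_partition : is_dyadic_partition trivial_part.
Proof.
  split; [|split].
  - intros r a [-> ->]. simpl. lia.
  - intros n. exists 0%nat, 0%nat. split; [split; reflexivity|]. unfold in_class. div_lia.
  - intros r a r' a' n [-> ->] [-> ->] _ _. auto.
Qed.

Section InterleavePart.

Variables P Q : nat -> nat -> Prop.

Lemma interleave_part_bounded r :
  (forall a, P r a -> a < 2 ^ r)%nat -> (forall a, Q r a -> a < 2 ^ r)%nat ->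
  forall a, interleave_part P Q (S r) a -> (a < 2 ^ S r)%nat.
Proof.
  intros HP HQ a. cbn [interleave_part]. unfold interleave. rewrite Nat.pow_succ_r'.
  destruct (_ =? _)%nat; [intros H%HP | intros H%HQ]; div_lia.
Qed.

Lemma interleave_part_covered n :
  interleave (covered P) (covered Q) n -> covered (interleave_part P Q) n.
Proof.
  intros H.
  assert (Hc : exists r a, (if (n mod 2 =? 0)%nat then P r a else Q r a) /\ in_class r a (n / 2))
    by (unfold interleave in H; now destruct (_ =? _)%nat).
  destruct Hc as (r & a & Ha & Hc).
  exists (S r), (2 * a + n mod 2)%nat. split.
  - cbn [interleave_part]. now rewrite interleave_double_add by div_lia.
  - apply in_class_double_add; [div_lia | auto].
Qed.

Lemma interleave_part_unique r :
  (forall r, unique_at P r) -> unique_at Q r -> unique_at (interleave_part P Q) (S r).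
Proof.
  intros HP HQ a [|r'] a' n Ha Ha' Hn Hn'; [destruct Ha'|].
  cbn [interleave_part] in Ha, Ha'. unfold interleave in Ha, Ha'.
  apply in_class_succ in Hn as [Hn0 Hn], Hn' as [Hn0' Hn'].
  assert (a = 2 * (a / 2) + a mod 2 /\ a' = 2 * (a' / 2) + a' mod 2)%nat by div_lia.
  destruct (Nat.eqb_spec (a mod 2) 0), (Nat.eqb_spec (a' mod 2) 0); try lia.
  - destruct (HP _ _ _ _ _ Ha Ha' Hn Hn'). split; [congruence | lia].
  - destruct (HQ _ _ _ _ Ha Ha' Hn Hn'). split; [congruence | lia].
Qed.

End InterleavePart.

Lemma interleave_part_partition P Q :
  is_dyadic_partition P -> is_dyadic_partition Q -> is_dyadic_partition (interleave_part P Q).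
Proof.
  intros (PB & PC & PU) (QB & QC & QU). split; [|split].
  - intros [|r] a H; [destruct H|]. exact (interleave_part_bounded P Q r (PB r) (QB r) a H).
  - intros n. apply interleave_part_covered. unfold interleave. destruct (_ =? _)%nat; [apply PC | apply QC].
  - intros [|r] a r' a' n H; [destruct H|]. exact (interleave_part_unique P Q r PU (QU r) a r' a' n H).
Qed.

Lemma interleave_part_fix_partition P :
  is_dyadic_partition P -> is_dyadic_partition (interleave_part_fix P).
Proof.
  intros (PB & PC & PU). split; [|split].
  - intros r. induction r as [|r IH]; intros a H; [destruct H|].
    exact (interleave_part_bounded P _ r (PB r) IH a H).
  - intros n. induction n as [n IH] using (well_founded_induction lt_wf).
    destruct (interleave_part_covered P (interleave_part_fix P) n) as (r & a & Ha & Hc).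
    + unfold interleave. destruct (Nat.eqb_spec (n mod 2) 0); [apply PC | apply IH; div_lia].
    + exists r, a. split; [apply interleave_part_fix_unfold|]; assumption.
  - intros r. induction r as [|r IH]; intros a r' a' n H H'; [destruct H|].
    apply (interleave_part_unique P _ r PU IH a r' a' n H).
    now apply interleave_part_fix_unfold.
Qed.

Definition in_classes (l : list (nat * nat)) (n : nat) : Prop :=
  exists p, In p l /\ in_class (fst p) (snd p) n.

Definition union_of (P : nat -> nat -> Prop) (B : nat -> Prop) : Prop :=
  exists l, (forall p, In p l -> P (fst p) (snd p)) /\ forall n, B n <-> in_classes l n.

Definition shift_class (b : nat) (p : nat * nat) : nat * nat := (S (fst p), 2 * snd p + b)%nat.

Lemma in_classes_app l l' n : in_classes (l ++ l') n <-> in_classes l n \/ in_classes l' n.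
Proof. unfold in_classes. setoid_rewrite in_app_iff. firstorder. Qed.

Lemma in_classes_shift b l n : (b < 2)%nat ->
  in_classes (map (shift_class b) l) n <-> (n mod 2 = b)%nat /\ in_classes l (n / 2).
Proof.
  intros Hb. unfold in_classes. split.
  - intros [p [Hp Hc]]. apply in_map_iff in Hp as [q [<- Hq]].
    apply in_class_double_add in Hc as [Hn Hc]; [|exact Hb]. eauto.
  - intros [Hn [q [Hq Hc]]]. exists (shift_class b q).
    split; [apply in_map_iff; eauto | apply in_class_double_add; auto].
Qed.

Lemma union_of_ext P B B' : (forall n, B n <-> B' n) -> union_of P B -> union_of P B'.
Proof. intros E (l & Hl & El). exists l. split; [exact Hl|]. intros n. rewrite <- E. apply El. Qed.

Lemma union_of_mono (P P' : nat -> nat -> Prop) B :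
  (forall r a, P r a -> P' r a) -> union_of P B -> union_of P' B.
Proof. intros HP (l & Hl & El). exists l. split; [auto | exact El]. Qed.

Lemma union_of_empty P : union_of P (fun _ => False).
Proof. exists nil. split; [intros p []|]. intros n. split; [easy | intros (p & [] & _)]. Qed.

Lemma union_of_full : union_of trivial_part (fun _ => True).
Proof.
  exists ((0, 0)%nat :: nil). split.
  - intros p [<- | []]. split; reflexivity.
  - intros n. split; [|easy]. intros _. exists (0, 0)%nat. split; [now left|]. apply Nat.mod_1_r.
Qed.

Lemma union_of_interleave P Q B0 B1 :
  union_of P B0 -> union_of Q B1 -> union_of (interleave_part P Q) (interleave B0 B1).
Proof.
  intros (l0 & Hl0 & E0) (l1 & Hl1 & E1).
  exists (map (shift_class 0) l0 ++ map (shift_class 1) l1). split.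
  - intros p Hp. apply in_app_or in Hp as [Hp | Hp]; apply in_map_iff in Hp as [q [<- Hq]];
      cbn [interleave_part shift_class fst snd]; rewrite interleave_double_add by lia; simpl; auto.
  - intros n. rewrite in_classes_app, !in_classes_shift by lia. unfold interleave.
    destruct (Nat.eqb_spec (n mod 2) 0) as [Hn | Hn].
    + rewrite E0. split; [auto | intros [[_ H] | [H _]]; [exact H | lia]].
    + rewrite E1. split; [intros H; right; split; [div_lia | exact H] | intros [[H _] | [_ H]]; [lia | exact H]].
Qed.

Lemma union_of_zero k : union_of trivial_part (inB k 0).
Proof.
  destruct (Z.eq_dec k 0) as [Hk | Hk].
  - apply (union_of_ext _ (fun _ => True)); [|exact union_of_full]. intros n. rewrite inB_zero. tauto.
  - apply (union_of_ext _ (fun _ => False)); [|apply union_of_empty]. intros n. rewrite inB_zero. tauto.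
Qed.

Lemma union_of_one k : union_of (interleave_part_fix trivial_part) (inB k 1).
Proof.
  revert k. apply (Z_downward_ind _ 2).
  - intros k Hk. apply (union_of_ext _ (fun _ => False)); [|apply union_of_empty].
    intros n. split; [easy | now apply not_inB_one].
  - intros k _ IH. apply (union_of_ext _ (interleave (inB (k - 1) 0) (inB (k + 1) 1))).
    + intros n. symmetry. exact (inB_double_succ k 0 n).
    + apply (union_of_mono (interleave_part trivial_part (interleave_part_fix trivial_part))).
      * intros r a. apply interleave_part_fix_unfold.
      * apply union_of_interleave; [apply union_of_zero | exact IH].
Qed.

Lemma dyadic_partition_exists t :
  exists P, is_dyadic_partition P /\ forall k, union_of P (inB k t).
Proof.
  induction t as [| | t IH | t IH IH'] using dyadic_ind.
  - exists trivial_part. split; [exact trivial_part_partition | exact union_of_zero].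
  - exists (interleave_part_fix trivial_part).
    split; [apply interleave_part_fix_partition, trivial_part_partition | exact union_of_one].
  - destruct IH as (P & HP & HB). exists (interleave_part P P).
    split; [now apply interleave_part_partition|]. intros k.
    apply (union_of_ext _ (interleave (inB k t) (inB k t))); [intros n; symmetry; apply inB_double|].
    now apply union_of_interleave.
  - destruct IH as (P & HP & HB), IH' as (Q & HQ & HB'). exists (interleave_part P Q).
    split; [now apply interleave_part_partition|]. intros k.
    apply (union_of_ext _ (interleave (inB (k - 1) t) (inB (k + 1) (t + 1))));
      [intros n; symmetry; apply inB_double_succ|].
    now apply union_of_interleave.
Qed.

Definition count (f : nat -> bool) (N : nat) : nat := length (filter f (seq 0 N)).

Definition has_density (f : nat -> bool) (d : R) : Prop :=
  Un_cv (fun N => INR (count f N) / INR N) d.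

Definition density (f : nat -> bool) : R := real (Lim_seq (fun N => INR (count f N) / INR N)).

Lemma density_eq f d : has_density f d -> density f = d.
Proof. intros H. apply is_lim_seq_Reals in H. unfold density. now rewrite (is_lim_seq_unique _ _ H). Qed.

Lemma has_density_ext f g d : (forall n, f n = g n) -> has_density f d -> has_density g d.
Proof.
  intros E H. apply is_lim_seq_Reals, (is_lim_seq_ext (fun N => INR (count f N) / INR N)).
  - intros N. unfold count. now rewrite (filter_ext f g E).
  - now apply is_lim_seq_Reals.
Qed.

Lemma count_succ f N : count f (S N) = (count f N + if f N then 1 else 0)%nat.
Proof. unfold count. rewrite seq_S, filter_app, length_app. simpl. now destruct (f N). Qed.

Lemma has_density_const (b : bool) : has_density (fun _ => b) (if b then 1 else 0).
Proof.
  assert (Hc : forall N, count (fun _ => b) N = if b then N else 0%nat).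
  { induction N as [|N IH]; [now destruct b|]. rewrite count_succ, IH. destruct b; lia. }
  apply is_lim_seq_Reals, (is_lim_seq_ext_loc (fun _ => if b then 1 else 0)); [|apply is_lim_seq_const].
  exists 1%nat. intros N HN. rewrite Hc. assert (0 < INR N) by (apply lt_0_INR; lia).
  destruct b; simpl; field; lra.
Qed.

Lemma count_interleave f0 f1 N :
  count (interleave f0 f1) N = (count f0 ((N + 1) / 2) + count f1 (N / 2))%nat.
Proof.
  induction N as [|N IH]; [reflexivity|]. rewrite count_succ, IH. unfold interleave.
  destruct (Nat.eqb_spec (N mod 2) 0).
  - replace ((S N + 1) / 2)%nat with (S (N / 2)) by div_lia.
    replace (S N / 2)%nat with (N / 2)%nat by div_lia.
    replace ((N + 1) / 2)%nat with (N / 2)%nat by div_lia.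
    rewrite count_succ. lia.
  - replace ((S N + 1) / 2)%nat with ((N + 1) / 2)%nat by div_lia.
    replace (S N / 2)%nat with (S (N / 2)) by div_lia.
    rewrite count_succ. lia.
Qed.

Lemma is_lim_seq_inv_INR : is_lim_seq (fun N => / INR N) 0.
Proof. exact (is_lim_seq_inv _ _ is_lim_seq_INR ltac:(discriminate)). Qed.

Section HalfIndex.

Variable h : nat -> nat.
Hypothesis h_half : forall N, (N <= 2 * h N + 1 /\ 2 * h N <= N + 1)%nat.

Lemma is_lim_seq_half_ratio : is_lim_seq (fun N => INR (h N) / INR N) (/ 2).
Proof.
  apply (is_lim_seq_le_le_loc (fun N => / 2 - / 2 * / INR N) _ (fun N => / 2 + / 2 * / INR N)).
  - exists 1%nat. intros N HN. destruct (h_half N) as [H1 H2].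
    apply le_INR in H1, H2. rewrite plus_INR, mult_INR in H1, H2. simpl INR in H1, H2.
    assert (0 < INR N) by (apply lt_0_INR; lia).
    split; apply (Rmult_le_reg_r (INR N)); try lra; field_simplify; lra.
  - replace (/ 2) with (/ 2 - / 2 * 0) at 1 by ring.
    apply is_lim_seq_minus'; [apply is_lim_seq_const|].
    apply is_lim_seq_mult'; [apply is_lim_seq_const | exact is_lim_seq_inv_INR].
  - replace (/ 2) with (/ 2 + / 2 * 0) at 1 by ring.
    apply is_lim_seq_plus'; [apply is_lim_seq_const|].
    apply is_lim_seq_mult'; [apply is_lim_seq_const | exact is_lim_seq_inv_INR].
Qed.

(* Factor [a (h N) / N] as [a (h N) / h N * (h N / N)]; the first factor is a subsequence
   of [a M / M] since [h N] tends to infinity. *)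
Lemma is_lim_seq_half_index (a : nat -> nat) (d : R) :
  is_lim_seq (fun M => INR (a M) / INR M) d ->
  is_lim_seq (fun N => INR (a (h N)) / INR N) (d / 2).
Proof.
  intros Ha.
  apply (is_lim_seq_ext_loc (fun N => INR (a (h N)) / INR (h N) * (INR (h N) / INR N))).
  - exists 2%nat. intros N HN. destruct (h_half N).
    field. split; apply not_0_INR; lia.
  - apply is_lim_seq_mult'; [|exact is_lim_seq_half_ratio].
    apply (is_lim_seq_subseq (fun M => INR (a M) / INR M)); [|exact Ha].
    intros P [M HM]. exists (2 * M + 1)%nat. intros N HN. apply HM. destruct (h_half N). lia.
Qed.

End HalfIndex.

Lemma has_density_interleave f0 f1 d0 d1 :
  has_density f0 d0 -> has_density f1 d1 -> has_density (interleave f0 f1) ((d0 + d1) / 2).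
Proof.
  intros H0 H1. apply is_lim_seq_Reals in H0, H1. apply is_lim_seq_Reals.
  apply (is_lim_seq_ext (fun N => INR (count f0 ((N + 1) / 2)) / INR N + INR (count f1 (N / 2)) / INR N)).
  - intros N. rewrite count_interleave, plus_INR. unfold Rdiv. ring.
  - replace ((d0 + d1) / 2) with (d0 / 2 + d1 / 2) by field.
    apply is_lim_seq_plus'.
    + apply (is_lim_seq_half_index (fun N => (N + 1) / 2)%nat); [intros N; div_lia | exact H0].
    + apply (is_lim_seq_half_index (fun N => N / 2)%nat); [intros N; div_lia | exact H1].
Qed.

Lemma density_interleave f0 f1 g :
  (forall n, g n = interleave f0 f1 n) ->
  has_density f0 (density f0) -> has_density f1 (density f1) ->
  density g = (density f0 + density f1) / 2.
Proof.
  intros E H0 H1. apply density_eq, (has_density_ext (interleave f0 f1)); [|now apply has_density_interleave].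
  intros n. now rewrite E.
Qed.

Lemma has_density_zero k : has_density (inBb k 0) (if (k =? 0)%Z then 1 else 0).
Proof.
  apply (has_density_ext (fun _ => (k =? 0)%Z)); [intros n; symmetry; apply inBb_zero|].
  apply has_density_const.
Qed.

Lemma has_density_one k : has_density (inBb k 1) (if (k <=? 1)%Z then powerRZ 2 (k - 2) else 0).
Proof.
  revert k. apply (Z_downward_ind _ 2).
  - intros k Hk. rewrite (proj2 (Z.leb_gt k 1)) by lia.
    apply (has_density_ext (fun _ => false)); [|exact (has_density_const false)].
    intros n. symmetry. apply Bool.not_true_iff_false. rewrite inBb_spec. now apply not_inB_one.
  - intros k Hk IH.
    apply (has_density_ext (interleave (inBb (k - 1) 0) (inBb (k + 1) 1)));
      [intros n; symmetry; exact (inBb_double_succ k 0 n)|].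
    replace (if (k <=? 1)%Z then powerRZ 2 (k - 2) else 0)
      with (((if (k - 1 =? 0)%Z then 1 else 0) + (if (k + 1 <=? 1)%Z then powerRZ 2 (k + 1 - 2) else 0)) / 2).
    + apply has_density_interleave; [apply has_density_zero | exact IH].
    + rewrite (proj2 (Z.leb_le k 1)) by lia. destruct (Z.eqb_spec (k - 1) 0).
      * replace k with 1%Z by lia. simpl. field.
      * rewrite (proj2 (Z.leb_le (k + 1) 1)) by lia.
        replace (k + 1 - 2)%Z with (k - 2 + 1)%Z by ring. rewrite powerRZ_add by lra. simpl. field.
Qed.

Lemma has_density_inBb k t : has_density (inBb k t) (density (inBb k t)).
Proof.
  enough (H : forall t k, exists d, has_density (inBb k t) d).
  { destruct (H t k) as [d Hd]. now rewrite (density_eq _ _ Hd). }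
  intros t'. induction t' as [| | u IH | u IH IH'] using dyadic_ind; intros k'.
  - eexists. apply has_density_zero.
  - eexists. apply has_density_one.
  - destruct (IH k') as [d Hd]. exists ((d + d) / 2).
    apply (has_density_ext (interleave (inBb k' u) (inBb k' u))); [intros n; symmetry; apply inBb_double|].
    now apply has_density_interleave.
  - destruct (IH (k' - 1)%Z) as [d0 H0], (IH' (k' + 1)%Z) as [d1 H1]. exists ((d0 + d1) / 2).
    apply (has_density_ext (interleave (inBb (k' - 1) u) (inBb (k' + 1) (u + 1))));
      [intros n; symmetry; apply inBb_double_succ|].
    now apply has_density_interleave.
Qed.

Theorem lemma2p1 :
  (forall t : nat, exists P : nat -> nat -> Prop,
     is_dyadic_partition P /\
     forall k : Z, exists l : list (nat * nat),
       (forall p, In p l -> P (fst p) (snd p)) /\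
       (forall n : nat, inB k t n <-> exists p, In p l /\ in_class (fst p) (snd p) n))
  /\
  (exists delta : Z -> nat -> R,
     (forall (k : Z) (t : nat), has_densityB k t (delta k t)) /\
     (forall k : Z, delta k 1%nat = if Z.leb k 1 then powerRZ 2 (k - 2) else 0) /\
     (forall (k : Z) (t : nat), (1 <= t)%nat -> delta k (2 * t)%nat = delta k t) /\
     (forall (k : Z) (t : nat), (1 <= t)%nat ->
        delta k (2 * t + 1)%nat = / 2 * delta (k - 1)%Z t + / 2 * delta (k + 1)%Z (t + 1)%nat)).
Proof.
  split; [exact dyadic_partition_exists|].
  exists (fun k t => density (inBb k t)). split; [|split; [|split]].
  (* The recurrences hold for [t = 0] as well. *)
  - exact has_density_inBb.
  - intros k. apply density_eq, has_density_one.
  - intros k t _. rewrite (density_interleave _ _ _ (inBb_double k t)) by apply has_density_inBb.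
    field.
  - intros k t _. rewrite (density_interleave _ _ _ (inBb_double_succ k t)) by apply has_density_inBb.
    field.
Qed.
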